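(* Let $(X,d)$ be a Hadamard space, $\mathbf a$ a mask, $S$ the associated barycentric scheme, and $(X_n^{\mathbf a})_{n\ge0}$ the characteristic Markov chain of $\mathbf a$. Let $x\in\ell^\infty(\mathbb Z^s,X)$ and $n\in\mathbb N$. Then for every initial distribution $\alpha$ on $\mathbb Z^s$, $$(S^nx)\circ X_0^{\mathbf a}=E\big(x\circ X_n^{\mathbf a}\,\big|\big|\big|\,\mathcal F_0\big)\quad \mathbb P_\alpha\text{-almost surely},$$ where the filtered conditional expectation is taken with respect to the filtration $\mathcal F_0\subseteq\mathcal F_1\subseteq\dots\subseteq\mathcal F_n$ and the measure $\mathbb P_\alpha$.
   Context: Hadamard space: complete metric space $(X,d)$ such that for any $x_0,x_1\in X$ there is $y$ with $d(z,y)^2\le\frac12d(z,x_0)^2+\frac12d(z,x_1)^2-\frac14d(x_0,x_1)^2$ for all $z$. Mask: finitely supported nonnegative $(a_i)_{i\in\mathbb Z^s}$ with $\sum_j a_{i-2j}=1$ for all $i$. Barycentric scheme: $Sx_i=\operatorname{argmin}_{y\in X}\sum_j a_{i-2j}d^2(x_j,y)$ on $\ell^\infty(\mathbb Z^s,X)$. Define $a^{(0)}_i=\delta_{i,0}$ and $a^{(n+1)}_i=\sum_{j}a_{i-2j}a^{(n)}_j$. Characteristic Markov chain: on $\Omega=(\mathbb Z^s)^{\mathbb N_0}$ with product $\sigma$-algebra $\mathcal F$, let $X_n^{\mathbf a}(\omega)=\omega_n$, let $\mathcal F_n$ be the $\sigma$-algebra generated by $X_0^{\mathbf a},\dots,X_n^{\mathbf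 a}$, and for a probability distribution $\alpha$ on $\mathbb Z^s$ let $\mathbb P_\alpha$ be the probability measure with $\mathbb P_\alpha(X_0=i_0,\dots,X_n=i_n)=\alpha_{i_0}\prod_{k=1}^n a_{i_{k-1}-2i_k}$; its $m$-step transition probabilities are $p_{n,n+m}(i,j)=a^{(m)}_{i-2^mj}$. Conditional expectation (Sturm): for a sub-$\sigma$-algebra $\mathcal G$ and a square-integrable $X$-valued random variable $Y$ with separable image, $E(Y|\mathcal G)$ is the a.s. unique $\mathcal G$-measurable square-integrable $Z$ minimizing $Z'\mapsto E\,d^2(Y,Z')$ over $\mathcal G$-measurable square-integrable $Z'$. Filtered conditional expectation: for $\mathcal F_0\subseteq\dots\subseteq\mathcal F_N$ and $\mathcal F_N$-measurable $Y$, $E(Y|||\mathcal F_0)=E(\cdots E(E(Y|\mathcal F_{N-1})|\mathcal F_{N-2})\cdots|\mathcal F_0)$. *)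

From HB Require Import structures.
From mathcomp Require Import all_boot all_order all_algebra.
From mathcomp Require Import all_classical all_reals all_analysis.
From Stdlib Require Import ClassicalEpsilon.
Import Order.TTheory GRing.Theory Num.Theory.
Import numFieldNormedType.Exports.

Set Implicit Arguments.
Unset Strict Implicit.
Unset Printing Implicit Defensive.

Local Open Scope classical_set_scope.
Local Open Scope ring_scope.

Section Hadamard.
Variables (R : realType) (X : Type) (d : X -> X -> R).

Definition is_metric : Prop :=
  [/\ (forall x y, 0 <= d x y),
      (forall x y, d x y = 0 <-> x = y),
      (forall x y, d x y = d y x) &
      (forall x y z, d x z <= d x y + d y z)].

Definition metric_complete : Prop :=
  forall u : nat -> X,
    (forall e : R, 0 < e -> exists N : nat,
        forall m k : nat, (N <= m)%N -> (N <= k)%N -> d (u m) (u k) < e) ->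
    exists l : X, forall e : R, 0 < e -> exists N : nat,
        forall k : nat, (N <= k)%N -> d (u k) l < e.

Definition hadamard : Prop :=
  [/\ is_metric, metric_complete &
      forall x0 x1 : X, exists y : X, forall z : X,
        d z y ^+ 2 <= 2^-1 * d z x0 ^+ 2 + 2^-1 * d z x1 ^+ 2
                      - 4^-1 * d x0 x1 ^+ 2].

Definition openX (U : set X) : Prop :=
  forall x, U x -> exists e : R, 0 < e /\ forall y, d x y < e -> U y.

Definition separable_range (T : Type) (Y : T -> X) : Prop :=
  exists e : nat -> X, forall (w : T) (eps : R), 0 < eps ->
    exists k : nat, d (e k) (Y w) < eps.

(* a (the) minimizer of f, chosen by Hilbert's epsilon; x0 only witnesses
   that X is inhabited *)
Definition argmin (x0 : X) (f : X -> R) : X :=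
  epsilon (inhabits x0) (fun y => forall z, f y <= f z).

End Hadamard.

Notation Zs s := 'rV[int]_s.

Section Scheme.
Variables (R : realType) (s : nat).

Definition is_mask (a : Zs s -> R) : Prop :=
  [/\ (forall i, 0 <= a i),
      (exists r : seq (Zs s), forall i, i \notin r -> a i = 0) &
      (forall i, \sum_(j \in [set: Zs s]) a (i - j *+ 2) = 1)].

Variables (X : Type) (d : X -> X -> R).

Definition bounded_seq (x : Zs s -> X) : Prop :=
  exists M : R, forall i j, d (x i) (x j) <= M.

Definition scheme (a : Zs s -> R) (x : Zs s -> X) : Zs s -> X :=
  fun i => argmin (x i)
    (fun y => \sum_(j \in [set: Zs s]) a (i - j *+ 2) * d (x j) y ^+ 2).

End Scheme.

Definition Omega (s : nat) := nat -> Zs s.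
HB.instance Definition _ (s : nat) := gen_eqMixin (Omega s).
HB.instance Definition _ (s : nat) := gen_choiceMixin (Omega s).
HB.instance Definition _ (s : nat) :=
  isPointed.Build (Omega s) (fun _ => 0).

Definition Xn (s : nat) (k : nat) (w : Omega s) : Zs s := w k.

Definition coord_sets (s : nat) (m : option nat) : set (set (Omega s)) :=
  [set B | exists (k : nat) (A : set (Zs s)),
     (if m is Some m' then (k <= m')%N else True) /\ B = Xn k @^-1` A].

Arguments coord_sets : clear implicits.
Arguments Xn {s} k w.

Definition OmegaT (s : nat) := g_sigma_algebraType (coord_sets s None).

Definition Ffilt (s : nat) (m : nat) : set (set (OmegaT s)) :=
  <<s coord_sets s (Some m) >>.
Arguments Ffilt : clear implicits.

Definition is_distribution (R : realType) (s : nat) (alpha : Zs s -> R) : Prop :=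
  (forall i, 0 <= alpha i) /\ (\esum_(i in [set: Zs s]) (alpha i)%:E = 1)%E.

Definition is_chain_law (R : realType) (s : nat) (a alpha : Zs s -> R)
    (P : probability (OmegaT s) R) : Prop :=
  forall (m : nat) (i : nat -> Zs s),
    P [set w : OmegaT s | forall k, (k <= m)%N -> Xn k w = i k] =
    (alpha (i 0%N) * \prod_(k < m) a (i k - i k.+1 *+ 2))%:E.

Section CondExp.
Variables (R : realType) (X : Type) (d : X -> X -> R) (s : nat)
  (P : probability (OmegaT s) R).

Definition measurable_wrt (G : set (set (OmegaT s))) (Y : OmegaT s -> X) : Prop :=
  forall U : set X, openX d U -> G (Y @^-1` U).

Definition square_integrable (Y : OmegaT s -> X) : Prop :=
  exists z : X, (\int[P]_w ((d (Y w) z) ^+ 2)%:E < +oo)%E.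

Definition L2 (G : set (set (OmegaT s))) (Y : OmegaT s -> X) : Prop :=
  [/\ measurable_wrt G Y, separable_range d Y & square_integrable Y].

Definition is_condexp (G : set (set (OmegaT s))) (Y Z : OmegaT s -> X) : Prop :=
  L2 G Z /\
  forall Z' : OmegaT s -> X, L2 G Z' ->
    (\int[P]_w ((d (Y w) (Z w)) ^+ 2)%:E <=
     \int[P]_w ((d (Y w) (Z' w)) ^+ 2)%:E)%E.

Definition is_filtered_condexp (F : nat -> set (set (OmegaT s))) (N : nat)
    (Y Z0 : OmegaT s -> X) : Prop :=
  exists Z : nat -> OmegaT s -> X,
    [/\ Z N = Y, Z 0%N = Z0 &
        forall k, (k < N)%N -> is_condexp (F k) (Z k.+1) (Z k)].

End CondExp.

(* One step of the backward induction is all there is. Let Y depend only on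
   X_0, ..., X_(k+1) and equal y(X_(k+1)) on paths of positive weight. Every
   F_k-measurable Z depends only on X_0, ..., X_k, so E d^2(Y, Z) is the sum,
   over prefixes t = (i_0, ..., i_k), of P(X_0 .. X_k = t) times the cost
   sum_j a_(i_k - 2j) d^2(y_j, Z(t)) that (S y)_(i_k) minimises. Hence (S y)(X_k)
   is a conditional expectation of Y given F_k, and since barycentres are
   unique in a Hadamard space (by the midpoint inequality, which also makes
   minimising sequences Cauchy, so barycentres exist), every other one
   agrees with it on prefixes of positive probability. Iterating from k = n-1
   down to 0, and noting that almost every path starts in the support of
   alpha, gives the theorem. *)

From HB Require Import structures.
From mathcomp Require Import all_boot all_order all_algebra.
From mathcomp Require Import all_classical all_reals all_analysis.
From mathcomp Require Import ring lra measurable_realfun.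
From Stdlib Require Import ClassicalEpsilon.
Import Order.TTheory GRing.Theory Num.Theory.
Import numFieldNormedType.Exports.
Local Open Scope classical_set_scope.
Local Open Scope ring_scope.
Set Implicit Arguments.
Unset Strict Implicit.

Section MetricFacts.
Variables (R : realType) (X : Type) (d : X -> X -> R).
Hypothesis dm : is_metric d.

Lemma dist_ge0 x y : 0 <= d x y. Proof. by case: dm. Qed.
Lemma dist_eq0 x y : d x y = 0 <-> x = y. Proof. by case: dm. Qed.
Lemma dist_xx x : d x x = 0. Proof. exact/dist_eq0. Qed.
Lemma dist_sym x y : d x y = d y x. Proof. by case: dm. Qed.
Lemma dist_triangle x y z : d x z <= d x y + d y z. Proof. by case: dm. Qed.

Lemma sqr_dist_le_perturb x y z :
  d x z ^+ 2 <= d x y ^+ 2 + 2 * d y z * (d x y ^+ 2 + 1) + d y z ^+ 2.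
Proof.
have h := dist_triangle x y z; have h1 := dist_ge0 x z.
have h2 := dist_ge0 x y; have h3 := dist_ge0 y z.
have h4 : d x z ^+ 2 <= (d x y + d y z) ^+ 2.
  by rewrite ler_sqr ?nnegrE //; apply: addr_ge0.
have h5 : 0 <= (d x y - 1) ^+ 2 by apply: sqr_ge0.
nra.
Qed.

Lemma sqr_dist_triangle x y z : d x z ^+ 2 <= 2 * d x y ^+ 2 + 2 * d y z ^+ 2.
Proof.
have h := dist_triangle x y z; have h1 := dist_ge0 x z.
have h2 := dist_ge0 x y; have h3 := dist_ge0 y z.
have h4 : d x z ^+ 2 <= (d x y + d y z) ^+ 2.
  by rewrite ler_sqr ?nnegrE //; apply: addr_ge0.
have h5 : 0 <= (d x y - d y z) ^+ 2 by apply: sqr_ge0.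
nra.
Qed.

End MetricFacts.

Lemma hadamard_metric (R : realType) (X : Type) (d : X -> X -> R) :
  hadamard d -> is_metric d.
Proof. by case. Qed.

Section Barycentre.
Variables (R : realType) (X : Type) (d : X -> X -> R).
Hypothesis hd : hadamard d.
Variables (I : Type) (J : seq I) (w : I -> R) (p : I -> X).
Hypothesis w_ge0 : forall j, 0 <= w j.
Hypothesis w_sum : \sum_(j <- J) w j = 1.

Let dm := hadamard_metric hd.

Definition frechet z := \sum_(j <- J) w j * d (p j) z ^+ 2.

Lemma frechet_ge0 z : 0 <= frechet z.
Proof. by apply: sumr_ge0 => j _; apply: mulr_ge0 => //; apply: sqr_ge0. Qed.

Lemma frechet_midpoint z1 z2 : exists m,
  frechet m <= 2^-1 * frechet z1 + 2^-1 * frechet z2 - 4^-1 * d z1 z2 ^+ 2.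
Proof.
have [_ _ /(_ z1 z2) [m hm]] := hd; exists m.
have -> : 2^-1 * frechet z1 + 2^-1 * frechet z2 - 4^-1 * d z1 z2 ^+ 2 =
   \sum_(j <- J) w j * (2^-1 * d (p j) z1 ^+ 2 + 2^-1 * d (p j) z2 ^+ 2
                         - 4^-1 * d z1 z2 ^+ 2).
  rewrite [RHS](eq_bigr (fun j => 2^-1 * (w j * d (p j) z1 ^+ 2) +
     2^-1 * (w j * d (p j) z2 ^+ 2) - w j * (4^-1 * d z1 z2 ^+ 2))); last first.
    by move=> j _; ring.
  by rewrite sumrB big_split /= -mulr_suml -!mulr_sumr w_sum mul1r.
by apply: ler_sum => j _; apply: ler_wpM2l.
Qed.

Lemma sqr_dist_le_frechet_gap z1 z2 I0 :
  (forall z, I0 <= frechet z) ->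
  d z1 z2 ^+ 2 <= 2 * (frechet z1 - I0) + 2 * (frechet z2 - I0).
Proof.
move=> I0le; have [m hm] := frechet_midpoint z1 z2.
have := I0le m; lra.
Qed.

Lemma frechet_min_unique z v :
  (forall z', frechet z <= frechet z') -> frechet v <= frechet z -> v = z.
Proof.
move=> zmin vle; have := sqr_dist_le_frechet_gap v z zmin.
rewrite subrr mulr0 addr0 => h.
apply/(dist_eq0 dm)/eqP; rewrite -sqrf_eq0 eq_le sqr_ge0 andbT.
by apply: le_trans h _; rewrite pmulr_rle0 // subr_le0.
Qed.

Lemma sqr_dist_le_frechet m c : d m c ^+ 2 <= 2 * frechet m + 2 * frechet c.
Proof.
have -> : d m c ^+ 2 = \sum_(j <- J) w j * d m c ^+ 2.
  by rewrite -mulr_suml w_sum mul1r.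
rewrite /frechet !mulr_sumr -big_split /=; apply: ler_sum => j _.
have := sqr_dist_triangle dm m (p j) c; rewrite [d m (p j)](dist_sym dm).
by have := w_ge0 j; nra.
Qed.

Lemma frechet_le_perturb z l :
  frechet l <= frechet z + 2 * d z l * (frechet z + 1) + d z l ^+ 2.
Proof.
have -> : frechet z + 2 * d z l * (frechet z + 1) + d z l ^+ 2 =
  \sum_(j <- J) w j * (d (p j) z ^+ 2 + 2 * d z l * (d (p j) z ^+ 2 + 1)
      + d z l ^+ 2).
  rewrite (eq_bigr (fun j => w j * d (p j) z ^+ 2 + (2 * d z l) *
     (w j * d (p j) z ^+ 2 + w j) + w j * d z l ^+ 2)); last by move=> j _; ring.
  by rewrite !big_split /= -!mulr_sumr -mulr_suml big_split /= w_sum mul1r.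
by apply: ler_sum => j _; apply: ler_wpM2l => //; apply: sqr_dist_le_perturb.
Qed.

Lemma frechet_le_of_cvg (u : nat -> X) l I0 : 0 <= I0 ->
  (forall e, 0 < e -> exists N, forall k, (N <= k)%N -> d (u k) l < e) ->
  (forall e, 0 < e -> exists N, forall k, (N <= k)%N -> frechet (u k) <= I0 + e) ->
  frechet l <= I0.
Proof.
move=> I0ge0 ul uF; apply/ler_addgt0Pr => e e0.
pose B := I0 + 2; have BE : B = I0 + 2 by [].
have B1 : 1 <= B by lra.
have B0 : 0 < B by apply: lt_le_trans B1.
pose q := e / (8 * B); have qB : q * B = e / 8.
  by rewrite /q; field; rewrite gt_eqF.
have q0 : 0 < q by rewrite divr_gt0 // mulr_gt0.
have [N1 h1] := ul 1 ltr01; have [N2 h2] := ul q q0.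
have [N3 h3] := uF (e / 2) ltac:(lra); have [N4 h4] := uF 1 ltr01.
pose k := maxn (maxn N1 N2) (maxn N3 N4).
have [k1 k2 k3 k4] : [/\ (N1 <= k)%N, (N2 <= k)%N, (N3 <= k)%N & (N4 <= k)%N].
  by rewrite !leq_max !leqnn !orbT.
have := h1 k k1; have := h2 k k2; have := h3 k k3; have := h4 k k4.
have := frechet_le_perturb (u k) l; rewrite -mulrA.
have := frechet_ge0 (u k); have := dist_ge0 dm (u k) l.
set f := frechet (u k); set del := d (u k) l => del0 f0 hF f1 fe delq del1.
have hA : del * (f + 1) <= q * B by apply: ler_pM; lra.
have hC : del ^+ 2 <= del by rewrite expr2 ler_piMr //; lra.
have hq : q <= q * B by rewrite ler_peMr // ltW.
lra.
Qed.

Lemma frechet_min_exists (x0 : X) : exists z, forall z', frechet z <= frechet z'.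
Proof.
have small (e : R) : 0 < e -> exists N, forall k, (N <= k)%N -> k.+1%:R^-1 < e.
  by move=> e0; have [N _ hN] := near_infty_natSinv_lt (PosNum e0); exists N.
have hS : has_inf (range frechet).
  split; first by exists (frechet x0), x0.
  by exists 0 => _ [z _ <-]; apply: frechet_ge0.
pose I0 := inf (range frechet).
have I0le z : I0 <= frechet z by apply: ge_inf (proj2 hS) _ _; exists z.
have I0ge0 : 0 <= I0.
  by apply: lb_le_inf (proj1 hS) _ => _ [z _ <-]; apply: frechet_ge0.
have : forall n : nat, exists z, frechet z < I0 + n.+1%:R^-1.
  move=> n; have hn : 0 < n.+1%:R^-1 :> R by rewrite invr_gt0 ltr0Sn.
  by have [_ [z _ <-] hz] := inf_adherent hn hS; exists z.
case/choice => u hu.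
have [l ul] : exists l, forall e, 0 < e ->
    exists N, forall k, (N <= k)%N -> d (u k) l < e.
  have [_ d_complete _] := hd; apply: d_complete => e e0.
  have [N hN] := small (e * e / 4) ltac:(by rewrite divr_gt0 // mulr_gt0).
  exists N => m k hm hk; rewrite -ltr_sqr ?nnegrE ?(ltW e0) ?(dist_ge0 dm) //.
  have := sqr_dist_le_frechet_gap (u m) (u k) I0le.
  have := hu m; have := hu k; have := hN _ hm; have := hN _ hk.
  set A := m.+1%:R^-1; set B := k.+1%:R^-1; set E := e * e / 4.
  have EE : e ^+ 2 = 4 * E by rewrite /E; field.
  by rewrite EE; lra.
exists l => z'; apply: le_trans (I0le z'); apply: (frechet_le_of_cvg I0ge0 ul).
move=> e e0; have [N hN] := small e e0; exists N => k hk.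
by have := hu k; have := hN _ hk; set t := k.+1%:R^-1; lra.
Qed.

End Barycentre.

Section MaskWindow.
Variables (R : realType) (s : nat) (a : Zs s -> R) (r : seq (Zs s)).
Hypothesis a_supp : forall i, i \notin r -> a i = 0.

Definition halfZs (v : Zs s) : Zs s := map_mx (fun z : int => (z %/ 2)%Z) v.

Lemma halfZs_mul2 j : halfZs (j *+ 2) = j.
Proof.
apply/matrixP => k l; rewrite /halfZs mxE mulmxnE.
have -> : j k l *+ 2 = j k l * 2 by rewrite mulr_natr.
by rewrite mulzK.
Qed.

Definition mask_window i := undup [seq halfZs (i - k) | k <- r].

Lemma mask_window_uniq i : uniq (mask_window i). Proof. exact: undup_uniq. Qed.

Lemma mem_mask_window i j : a (i - j *+ 2) != 0 -> j \in mask_window i.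
Proof.
move=> h; rewrite mem_undup; apply/mapP; exists (i - j *+ 2).
  by apply: contraNT h => /a_supp ->.
by rewrite opprB addrC subrK halfZs_mul2.
Qed.

Lemma fsbig_mask_window i (f : Zs s -> R) :
  \sum_(j \in [set: Zs s]) a (i - j *+ 2) * f j =
  \sum_(j <- mask_window i) a (i - j *+ 2) * f j.
Proof.
rewrite (fsbigE (mask_window i)) ?mask_window_uniq //.
  by apply: eq_bigl => j; rewrite in_setT.
move=> j _ hj; have [/eqP -> | /mem_mask_window] := boolP (a (i - j *+ 2) == 0).
  by rewrite mul0r.
by rewrite (negPf hj).
Qed.

Hypothesis a_ge0 : forall i, 0 <= a i.
Hypothesis a_sum : forall i, \sum_(j \in [set: Zs s]) a (i - j *+ 2) = 1.

Lemma mask_window_sum i : \sum_(j <- mask_window i) a (i - j *+ 2) = 1.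
Proof.
rewrite -(a_sum i); under [RHS]eq_fsbigr do rewrite -[a _]mulr1.
by rewrite fsbig_mask_window; under [RHS]eq_bigr do rewrite mulr1.
Qed.

Variables (X : Type) (d : X -> X -> R).
Hypothesis hd : hadamard d.

Definition scheme_cost (y : Zs s -> X) i :=
  frechet d (mask_window i) (fun j => a (i - j *+ 2)) y.

Lemma scheme_cost_ge0 y i z : 0 <= scheme_cost y i z.
Proof. exact: frechet_ge0. Qed.

Lemma scheme_argmin y i : scheme d a y i = argmin (y i) (scheme_cost y i).
Proof.
by congr argmin; apply: funext => z; rewrite fsbig_mask_window.
Qed.

Lemma scheme_cost_min y i z : scheme_cost y i (scheme d a y i) <= scheme_cost y i z.
Proof.
rewrite scheme_argmin /argmin; move: z.
apply: (epsilon_spec (inhabits (y i))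
  (fun m => forall z, scheme_cost y i m <= scheme_cost y i z)).
exact: (frechet_min_exists hd y (fun j => a_ge0 _) (mask_window_sum i) (y i)).
Qed.

Lemma scheme_cost_min_unique y i v :
  scheme_cost y i v <= scheme_cost y i (scheme d a y i) -> v = scheme d a y i.
Proof.
exact: (frechet_min_unique hd (fun j => a_ge0 _) (mask_window_sum i)
  (scheme_cost_min y i)).
Qed.

Lemma scheme_bounded y c M : 0 <= M -> (forall i, d (y i) c <= M) ->
  forall i, d (scheme d a y i) c <= 2 * M.
Proof.
move=> M0 hy i; set m := scheme d a y i.
have dm := hadamard_metric hd.
have h1 := sqr_dist_le_frechet hd y (fun j => a_ge0 _) (mask_window_sum i) m c.
have h2 : scheme_cost y i m <= scheme_cost y i c by apply: scheme_cost_min.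
have h3 : scheme_cost y i c <= M ^+ 2.
  rewrite /scheme_cost /frechet -[M ^+ 2]mul1r -(mask_window_sum i) mulr_suml.
  apply: ler_sum => j _; apply: ler_wpM2l => //.
  by rewrite ler_sqr ?nnegrE ?(dist_ge0 dm).
have h4 : d m c ^+ 2 <= (2 * M) ^+ 2.
  have := scheme_cost_ge0 y i m; have := scheme_cost_ge0 y i c.
  rewrite /scheme_cost in h1 h2 h3 *; nra.
by rewrite -ler_sqr ?nnegrE ?(dist_ge0 dm) // mulr_ge0.
Qed.

End MaskWindow.

Section PathSpace.
Variable s : nat.
Local Notation Om := (OmegaT s).

Definition depends_on (m : nat) (T : Type) (f : Om -> T) :=
  forall w w' : Om, (forall i, (i <= m)%N -> Xn i w = Xn i w') -> f w = f w'.

Definition path_prefix (m : nat) (w : Om) : m.+1.-tuple (Zs s) :=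
  [tuple Xn i w | i < m.+1].

Definition of_prefix (m : nat) (t : m.+1.-tuple (Zs s)) : Om := fun i => nth 0 t i.

Lemma path_prefix_eq m (w w' : Om) :
  path_prefix m w = path_prefix m w' <-> forall i, (i <= m)%N -> Xn i w = Xn i w'.
Proof.
split => [h i im|h].
  have := congr1 (fun t => tnth t (Ordinal (im : (i < m.+1)%N))) h.
  by rewrite !tnth_mktuple.
by apply: eq_from_tnth => i; rewrite !tnth_mktuple; apply: h; rewrite -ltnS.
Qed.

Lemma path_prefixK m (t : m.+1.-tuple (Zs s)) : path_prefix m (of_prefix t) = t.
Proof. by apply: eq_from_tnth => i; rewrite tnth_mktuple (tnth_nth 0). Qed.

Lemma depends_on_prefix m T (f : Om -> T) w :
  depends_on m f -> f w = f (of_prefix (path_prefix m w)).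
Proof. by move=> h; apply: h; apply/path_prefix_eq; rewrite path_prefixK. Qed.

Lemma measurable_coord k (A : set (Zs s)) : measurable (Xn k @^-1` A : set Om).
Proof. by apply: sub_gen_smallest; exists k, A. Qed.

Lemma measurable_cylinder m (u : nat -> Zs s) :
  measurable [set w : Om | forall i, (i <= m)%N -> Xn i w = u i].
Proof.
have -> : [set w : Om | forall i, (i <= m)%N -> Xn i w = u i] =
   \bigcap_(i in [set i | (i <= m)%N]) (Xn i @^-1` [set u i] : set Om).
  by apply/seteqP; split => w /= h i /h.
by apply: bigcap_measurableType => k _; apply: measurable_coord.
Qed.

Lemma measurable_path_prefix m (t : m.+1.-tuple (Zs s)) :
  measurable [set w : Om | path_prefix m w = t].
Proof.
have -> : [set w : Om | path_prefix m w = t] =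
    [set w | forall i, (i <= m)%N -> Xn i w = Xn i (of_prefix t)].
  apply/seteqP; split => w /=.
    by move=> ht; apply/path_prefix_eq; rewrite path_prefixK.
  by move/path_prefix_eq; rewrite path_prefixK.
exact: measurable_cylinder.
Qed.

(* A map depending on finitely many coordinates factors through the countable
   set of prefixes. *)
Lemma measurable_depends m T (f : Om -> T) (B : set T) :
  depends_on m f -> measurable (f @^-1` B).
Proof.
move=> hf.
pose C n : set Om := if @pickle_inv (m.+1.-tuple (Zs s)) n is Some t
  then [set w | path_prefix m w = t /\ B (f (of_prefix t))] else set0.
have -> : f @^-1` B = \bigcup_n C n.
  apply/seteqP; split => w /=.
    move=> hB; exists (pickle (path_prefix m w)) => //.
    by rewrite /C pickleK_inv; split => //; rewrite -depends_on_prefix.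
  case=> n _; rewrite /C; case: pickle_inv => [t|] //= [ht hB].
  by rewrite (depends_on_prefix w hf) ht.
apply: bigcupT_measurable => n; rewrite /C; case: pickle_inv => [t|] //.
have [hB|hB] := pselect (B (f (of_prefix t))).
  have -> : [set w : Om | path_prefix m w = t /\ B (f (of_prefix t))] =
      [set w | path_prefix m w = t] by apply/seteqP; split => w /= [].
  exact: measurable_path_prefix.
have -> : [set w : Om | path_prefix m w = t /\ B (f (of_prefix t))] = set0.
  by apply/seteqP; split => w //= [].
exact: measurable0.
Qed.

Lemma measurable_fun_depends (R : realType) m (f : Om -> \bar R) :
  depends_on m f -> measurable_fun setT f.
Proof. by move=> hf _ Y _; rewrite setTI; exact: (measurable_depends Y hf). Qed.

Lemma Ffilt_coord k m (A : set (Zs s)) : (k <= m)%N -> Ffilt s m (Xn k @^-1` A).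
Proof. by move=> km; apply: sub_gen_smallest; exists k, A. Qed.

Lemma Ffilt_depends m (A : set Om) : Ffilt s m A -> depends_on m A.
Proof.
pose sat (A : set Om) := forall w w' : Om,
  (forall i, (i <= m)%N -> Xn i w = Xn i w') -> A w -> A w'.
suff hsat : Ffilt s m A -> sat A.
  move=> /hsat hA w w' h; apply/propext; split; first exact: hA.
  by apply: hA => i /h ->.
apply: smallest_sub.
  split.
  - by move=> w w' _.
  - move=> B hB w w' h [_ nBw]; split => // Bw'; apply: nBw.
    by apply: (hB w' w) => // i /h ->.
  - move=> F hF w w' h [k _ Fk]; exists k => //; exact: (hF k w w' h).
by move=> _ [k [B [km ->]]] w w' h /=; rewrite (h k km).
Qed.

End PathSpace.

(* An open ball around Z w separates Z w from Z w', so measurability forces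
   Z w = Z w'. *)
Lemma measurable_wrt_Ffilt_depends (R : realType) (X : Type) (d : X -> X -> R)
    (s m : nat) (Z : OmegaT s -> X) :
  is_metric d -> measurable_wrt d (Ffilt s m) Z -> depends_on m Z.
Proof.
move=> dm hZ w w' h; apply: contrapT => hne.
pose r := d (Z w) (Z w').
have r0 : 0 < r.
  rewrite lt_neqAle (dist_ge0 dm) andbT eq_sym; apply/eqP => /(dist_eq0 dm).
  exact: hne.
pose U := [set z | d (Z w) z < r].
have oU : openX d U.
  move=> z Uz; exists (r - d (Z w) z); split; first by rewrite subr_gt0.
  by move=> y hy; rewrite /U /=; have := dist_triangle dm (Z w) z y; lra.
have := Ffilt_depends (hZ U oU) h; rewrite /preimage /U /= (dist_xx dm) => hU.
by move: r0; rewrite hU /r ltxx.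
Qed.

Section ExtendedSums.
Local Open Scope ereal_scope.
Variable R : realType.

Lemma nneseries_pickle_inv (I : countType) (g : I -> \bar R) :
  (forall i, 0 <= g i) ->
  \sum_(n <oo) (if @pickle_inv I n is Some i then g i else 0) =
  \esum_(i in [set: I]) g i.
Proof.
move=> g0; pose G n := if @pickle_inv I n is Some i then g i else 0.
transitivity (\sum_(n <oo) G n); first by [].
have G0 n : 0 <= G n by rewrite /G; case: pickle_inv.
rewrite nneseries_esumT //.
transitivity (\esum_(i in [set: I]) G (pickle i)); last first.
  by apply: eq_esum => i _; rewrite /G pickleK_inv.
rewrite -(esum_image [set: I] pickle G); last first.
  by move=> i j _ _; apply: (pcan_inj pickleK_inv).
rewrite [RHS]esum_mkcond; apply: eq_esum => n _.
case: ifPn => [|hn]; first by move=> _.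
rewrite /G; case hp : (pickle_inv n) => [i|] //.
exfalso; move/negP: hn; apply; rewrite inE; exists i => //.
by have := @pickle_invK I n; rewrite hp.
Qed.

Lemma ge0_integral_countable_partition (dT : measure_display)
    (T : measurableType dT) (mu : {measure set T -> \bar R}) (I : countType)
    (A : I -> set T) (c : I -> \bar R) (f : T -> \bar R) :
  (forall i, measurable (A i)) ->
  (forall i j w, A i w -> A j w -> i = j) ->
  (forall w, exists i, A i w) ->
  (forall i w, A i w -> f w = c i) ->
  (forall i, 0 <= c i) ->
  measurable_fun setT f ->
  \int[mu]_w f w = \esum_(i in [set: I]) (c i * mu (A i)).
Proof.
move=> mA dA cA fA c0 mf.
pose B n := if @pickle_inv I n is Some i then A i else set0.
have mB n : measurable (B n) by rewrite /B; case: pickle_inv.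
have tB : trivIset setT B.
  move=> n k _ _ [w []]; rewrite /B.
  case hn : (pickle_inv n) => [i|] //; case hk : (pickle_inv k) => [j|] //.
  move=> Ai Aj; have ij := dA _ _ _ Ai Aj.
  have e1 : pickle i = n by have := @pickle_invK I n; rewrite hn.
  have e2 : pickle j = k by have := @pickle_invK I k; rewrite hk.
  by rewrite -e1 -e2 ij.
have cov : \bigcup_n B n = setT.
  apply/seteqP; split => // w _; have [i Ai] := cA w.
  by exists (pickle i) => //; rewrite /B pickleK_inv.
have f0 w : 0 <= f w by have [i Ai] := cA w; rewrite (fA _ _ Ai).
rewrite -nneseries_pickle_inv => [|i]; last by rewrite mule_ge0.
transitivity (\int[mu]_(w in \bigcup_n B n) f w); first by rewrite cov.
rewrite ge0_integral_bigcup //; last by rewrite cov.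
apply: eq_eseriesr => n _; rewrite /B; case: pickle_inv => [i|].
  rewrite -integral_cst //; apply: eq_integral => w; rewrite inE => Aw.
  exact: fA.
exact: integral_set0.
Qed.

Lemma esum_fin_support (T : choiceType) (J : seq T) (f : T -> R) :
  uniq J -> (forall j, (0 <= f j)%R) -> (forall j, j \notin J -> f j = 0%R) ->
  \esum_(j in [set: T]) (f j)%:E = (\sum_(j <- J) f j)%:E.
Proof.
move=> uJ f0 fJ.
rewrite (esumID [set` J]); last by move=> j _; rewrite lee_fin.
rewrite [X in _ + X]esum1 ?adde0; last first.
  by move=> j [_ /= hj]; rewrite fJ //; apply/negP.
rewrite setTI esum_fset; [|exact: finite_seq|by move=> j _; rewrite lee_fin].
by rewrite -fsbig_seq // sumEFin.
Qed.

Lemma esum_eq_of_le (I : choiceType) (f g : I -> \bar R) :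
  (forall i, 0 <= g i) -> (forall i, g i <= f i) ->
  \esum_(i in [set: I]) f i <= \esum_(i in [set: I]) g i ->
  \esum_(i in [set: I]) g i < +oo -> forall i, f i = g i.
Proof.
move=> g0 gf hle hfin i0.
have f0 i : 0 <= f i by apply: le_trans (gf i).
have split (h : I -> \bar R) : (forall i, 0 <= h i) ->
    \esum_(i in [set: I]) h i = h i0 + \esum_(i in [set: I] `&` ~` [set i0]) h i.
  by move=> h0; rewrite (esumID [set i0]) // setTI esum_set1.
move: hle hfin; rewrite (split f f0) (split g g0).
set Sf := esum _ f; set Sg := esum _ g => hle hfin.
have SgSf : Sg <= Sf by apply: le_esum => i _; exact: gf.
have Sg0 : 0 <= Sg by apply: esum_ge0 => i _; exact: g0.
have Sgfin : Sg \is a fin_num.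
  by rewrite ge0_fin_numE //; apply: le_lt_trans hfin; rewrite leeDr.
apply/eqP; rewrite eq_le gf andbT -(leeD2rE _ _ Sgfin).
by apply: le_trans hle; rewrite leeD2l.
Qed.

End ExtendedSums.

Lemma integral_bounded_lt_pinfty (R : realType) (dT : measure_display)
    (T : measurableType dT) (P : probability T R) (f : T -> R) (M : R) :
  measurable_fun setT (EFin \o f) -> (forall w, 0 <= f w <= M) ->
  (\int[P]_w (f w)%:E < +oo)%E.
Proof.
move=> mf hf; apply: (@le_lt_trans _ _ (\int[P]_w (cst M%:E) w)%E).
  apply: ge0_le_integral => //.
  - by move=> w _; rewrite lee_fin; case/andP: (hf w).
  - by move=> w _; rewrite lee_fin; case/andP: (hf w).
rewrite integral_cst //; set u := (X in (_ * X)%E).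
have -> : u = 1%E by exact: probability_setT.
by rewrite mule1 ltry.
Qed.

Section ChainLaw.
Variables (R : realType) (s : nat) (a alpha : Zs s -> R)
  (P : probability (OmegaT s) R).
Hypothesis chain : is_chain_law a alpha P.
Hypothesis a_ge0 : forall i, 0 <= a i.
Hypothesis alpha_ge0 : forall i, 0 <= alpha i.
Local Notation Om := (OmegaT s).

(* By [is_chain_law], [path_weight m w] is the probability that a path starts
   with the same m+1 sites as [w]. *)
Definition path_weight m (w : Om) : R :=
  alpha (Xn 0 w) * \prod_(k < m) a (Xn k w - Xn k.+1 w *+ 2).

Lemma path_weight_ge0 m w : 0 <= path_weight m w.
Proof. by apply: mulr_ge0 => //; apply: prodr_ge0 => k _. Qed.

Lemma path_weightS m w :
  path_weight m.+1 w = path_weight m w * a (Xn m w - Xn m.+1 w *+ 2).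
Proof. by rewrite /path_weight big_ord_recr /= mulrA. Qed.

Lemma path_weight_depends m : depends_on m (path_weight m).
Proof.
move=> w w' h; rewrite /path_weight (h 0%N) //; congr (_ * _).
by apply: eq_bigr => k _; rewrite (h k) ?(h k.+1) // ltnW.
Qed.

Definition eq_on_support (X : Type) m (Y Y' : Om -> X) :=
  depends_on m Y /\ forall w, path_weight m w != 0 -> Y w = Y' w.

Variable k : nat.

Definition extend_prefix (t : k.+1.-tuple (Zs s)) (j : Zs s) : Om :=
  fun i => if (i <= k)%N then nth 0 t i else j.

Definition prefix_cell (p : k.+1.-tuple (Zs s) * Zs s) : set Om :=
  [set w | path_prefix k w = p.1 /\ Xn k.+1 w = p.2].

Lemma prefix_cellE p : prefix_cell p =
  [set w | forall i, (i <= k.+1)%N -> Xn i w = Xn i (extend_prefix p.1 p.2)].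
Proof.
case: p => t j; apply/seteqP; split => w /=.
  case=> ht hj i; rewrite leq_eqVlt => /orP [/eqP ->|ik].
    by rewrite hj /Xn /extend_prefix ltnn.
  rewrite ltnS in ik; rewrite /Xn /extend_prefix ik -[nth 0 t i]/(Xn i (of_prefix t)).
  by move: i ik; apply/path_prefix_eq; rewrite path_prefixK.
move=> h; split; last by rewrite h // /Xn /extend_prefix ltnn.
rewrite -[t]path_prefixK; apply/path_prefix_eq => i ik.
by rewrite h ?(leqW ik) // /Xn /extend_prefix ik.
Qed.

Lemma measurable_prefix_cell p : measurable (prefix_cell p).
Proof. by rewrite prefix_cellE; apply: measurable_cylinder. Qed.

Lemma chain_law_prefix_cell p :
  P (prefix_cell p) = (path_weight k.+1 (extend_prefix p.1 p.2))%:E.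
Proof.
by rewrite prefix_cellE (chain k.+1 (fun i => Xn i (extend_prefix p.1 p.2))).
Qed.

Lemma path_weight_extend_prefix t j :
  path_weight k.+1 (extend_prefix t j) =
  path_weight k (of_prefix t) * a (nth 0 t k - j *+ 2).
Proof.
rewrite path_weightS; congr (_ * _).
  by apply: path_weight_depends => i ik; rewrite /Xn /extend_prefix /of_prefix ik.
by rewrite /Xn /extend_prefix leqnn ltnn.
Qed.

Lemma integral_depends_decomp (h : Om -> \bar R) :
  depends_on k.+1 h -> (forall w, 0 <= h w)%E ->
  (\int[P]_w h w = \esum_(p in [set: k.+1.-tuple (Zs s) * Zs s])
      (h (extend_prefix p.1 p.2) * (path_weight k.+1 (extend_prefix p.1 p.2))%:E))%E.
Proof.
move=> hdep h0.
rewrite (@ge0_integral_countable_partition _ _ _ P _ prefix_cell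
           (fun p => h (extend_prefix p.1 p.2))).
- by apply: eq_esum => p _; congr (_ * _)%E; exact: chain_law_prefix_cell.
- exact: measurable_prefix_cell.
- by move=> [t j] [t' j'] w [/= <- <-] [/= <- <-].
- by move=> w; exists (path_prefix k w, Xn k.+1 w).
- by move=> p w; rewrite prefix_cellE => hw; apply: hdep => i ik; exact: hw.
- by move=> p; apply: h0.
- exact: measurable_fun_depends hdep.
Qed.

Lemma chain_law_null (A : set Om) : depends_on k.+1 A ->
  (forall w, A w -> path_weight k.+1 w = 0) -> P A = 0%E.
Proof.
move=> hA A0.
have mA : measurable A.
  have -> : A = A @^-1` [set True].
    by apply/seteqP; split => w /=; [move/propT | move=> ->].
  exact: (measurable_depends _ hA).
rewrite -[A]setIT -integral_indic //.
rewrite (@integral_depends_decomp (fun w => (\1_A w)%:E)).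
- apply: esum1 => p _; rewrite indicE; case: (boolP (_ \in A)) => [|_].
    by rewrite in_setE => /A0 ->; rewrite mule0.
  by rewrite mul0e.
- move=> w w' h /=; rewrite !indicE.
  by have -> : (w \in A) = (w' \in A) by apply/idP/idP; rewrite !in_setE (hA w w' h).
- by move=> w; rewrite lee_fin indicE; case: (_ \in _).
Qed.

End ChainLaw.

Section OneStep.
Variables (R : realType) (s : nat) (a alpha : Zs s -> R)
  (P : probability (OmegaT s) R) (r : seq (Zs s)) (X : Type) (d : X -> X -> R).
Hypothesis chain : is_chain_law a alpha P.
Hypothesis a_ge0 : forall i, 0 <= a i.
Hypothesis alpha_ge0 : forall i, 0 <= alpha i.
Hypothesis a_supp : forall i, i \notin r -> a i = 0.
Hypothesis a_sum : forall i, \sum_(j \in [set: Zs s]) a (i - j *+ 2) = 1.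
Hypothesis hd : hadamard d.
Local Notation Om := (OmegaT s).
Let dm := hadamard_metric hd.

Variables (k : nat) (y : Zs s -> X).

Definition scheme_along (w : Om) := scheme d a y (Xn k w).

Lemma scheme_along_depends : depends_on k scheme_along.
Proof. by move=> w w' h; rewrite /scheme_along h. Qed.

(* Conditioning on the prefix of length k+1 turns the quadratic cost into the
   barycentric cost of the scheme at the last visited site. *)
Lemma integral_cost_decomp (Y V : Om -> X) :
  eq_on_support a alpha k.+1 Y (fun w => y (Xn k.+1 w)) -> depends_on k V ->
  (\int[P]_w ((d (Y w) (V w)) ^+ 2)%:E)%E =
  \esum_(t in [set: k.+1.-tuple (Zs s)])
     (path_weight a alpha k (of_prefix t) *
      scheme_cost a r d y (nth 0 t k) (V (of_prefix t)))%:E.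
Proof.
move=> [hY hYy] hV.
pose term (t : k.+1.-tuple (Zs s)) (j : Zs s) := path_weight a alpha k (of_prefix t) *
  (a (nth 0 t k - j *+ 2) * d (y j) (V (of_prefix t)) ^+ 2).
have term_ge0 t j : 0 <= term t j.
  by rewrite mulr_ge0 ?path_weight_ge0 // mulr_ge0 // sqr_ge0.
rewrite (@integral_depends_decomp _ _ _ _ _ chain k
  (fun w => ((d (Y w) (V w)) ^+ 2)%:E)).
- transitivity (\esum_(p in [set: k.+1.-tuple (Zs s) * Zs s]) (term p.1 p.2)%:E).
    apply: eq_esum => -[t j] _ /=; rewrite path_weight_extend_prefix /term.
    have [w0|w0] := eqVneq (path_weight a alpha k (of_prefix t) *
                           a (nth 0 t k - j *+ 2)) 0.
      by rewrite w0 mule0 mulrA w0 mul0r.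
    rewrite hYy ?path_weight_extend_prefix //.
    have -> : Xn k.+1 (extend_prefix t j) = j by rewrite /Xn /extend_prefix ltnn.
    have -> : V (extend_prefix t j) = V (of_prefix t).
      by apply: hV => i ik; rewrite /Xn /extend_prefix /of_prefix ik.
    by rewrite -EFinM; congr (_%:E); ring.
  have -> : [set: k.+1.-tuple (Zs s) * Zs s] =
     [set: k.+1.-tuple (Zs s)] `*`` (fun _ => [set: Zs s]) by apply/seteqP; split.
  rewrite -(@esum_esum _ _ _ _ _ (fun t j => (term t j)%:E)); last first.
    by move=> t j _ _; rewrite lee_fin.
  apply: eq_esum => t _; rewrite (esum_fin_support (mask_window_uniq r (nth 0 t k))) //.
    by rewrite /term /scheme_cost /frechet mulr_sumr.
  move=> j hj; have [a0|/(mem_mask_window a_supp)] := eqVneq (a (nth 0 t k - j *+ 2)) 0.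
    by rewrite /term a0 mul0r mulr0.
  by rewrite (negPf hj).
- move=> w w' h /=; rewrite (hY w w' h) (hV w w') // => i ik.
  by apply: h; rewrite leqW.
- by move=> w; rewrite lee_fin sqr_ge0.
Qed.

Variables (c : X) (M : R).
Hypothesis M0 : 0 <= M.
Hypothesis y_bounded : forall i, d (y i) c <= M.

Lemma scheme_along_bounded w : d (scheme_along w) c <= 2 * M.
Proof. exact: (scheme_bounded a_supp a_ge0 a_sum hd M0 y_bounded). Qed.

Lemma scheme_along_L2 : L2 d P (Ffilt s k) scheme_along.
Proof.
split.
- by move=> U _; exact: (Ffilt_coord (scheme d a y @^-1` U) (leqnn k)).
- exists (fun n => if @pickle_inv (Zs s) n is Some i then scheme d a y i else c).
  move=> w eps e0; exists (pickle (Xn k w)).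
  by rewrite pickleK_inv (dist_xx dm).
- exists c; apply: (@integral_bounded_lt_pinfty _ _ _ _ _ ((2 * M) ^+ 2)).
    apply: (measurable_fun_depends (m := k)) => w w' h /=.
    by rewrite (scheme_along_depends h).
  move=> w; rewrite sqr_ge0 ler_sqr ?nnegrE ?(dist_ge0 dm) ?mulr_ge0 //.
  exact: scheme_along_bounded.
Qed.

Lemma scheme_along_condexp (Y : Om -> X) :
  eq_on_support a alpha k.+1 Y (fun w => y (Xn k.+1 w)) ->
  is_condexp d P (Ffilt s k) Y scheme_along.
Proof.
move=> hY; split; first exact: scheme_along_L2.
move=> Z [hZ _ _]; have dZ := measurable_wrt_Ffilt_depends dm hZ.
rewrite (integral_cost_decomp hY scheme_along_depends) (integral_cost_decomp hY dZ).
apply: le_esum => t _; rewrite lee_fin ler_wpM2l ?path_weight_ge0 //.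
exact: (scheme_cost_min a_supp a_ge0 a_sum hd).
Qed.

Lemma cost_scheme_along_lt_pinfty :
  (\int[P]_w ((d (y (Xn k.+1 w)) (scheme_along w)) ^+ 2)%:E < +oo)%E.
Proof.
apply: (@integral_bounded_lt_pinfty _ _ _ _ _ ((3 * M) ^+ 2)).
  apply: (measurable_fun_depends (m := k.+1)) => w w' h /=.
  by rewrite (h k.+1) // (@scheme_along_depends w w') // => i ik; rewrite h ?leqW.
move=> w; rewrite sqr_ge0 ler_sqr ?nnegrE ?(dist_ge0 dm) ?mulr_ge0 //=.
apply: le_trans (dist_triangle dm _ c _) _; rewrite (dist_sym dm c).
by have := y_bounded (Xn k.+1 w); have := scheme_along_bounded w; lra.
Qed.

(* The cost of a minimiser is finite, so the termwise inequality of the cost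
   decompositions is an equality on every prefix; on prefixes of positive
   weight this pins down the barycentre. *)
Lemma condexp_eq_on_support (Y Z : Om -> X) :
  eq_on_support a alpha k.+1 Y (fun w => y (Xn k.+1 w)) ->
  is_condexp d P (Ffilt s k) Y Z -> eq_on_support a alpha k Z scheme_along.
Proof.
move=> hY [[hZ _ _] Zmin].
have dZ := measurable_wrt_Ffilt_depends dm hZ; split => //.
have hle := Zmin _ scheme_along_L2.
rewrite (integral_cost_decomp hY scheme_along_depends) in hle.
rewrite (integral_cost_decomp hY dZ) in hle.
pose cost (V : Om -> X) (t : k.+1.-tuple (Zs s)) :=
  (path_weight a alpha k (of_prefix t) *
   scheme_cost a r d y (nth 0 t k) (V (of_prefix t)))%:E.
have cost_min t : (cost scheme_along t <= cost Z t)%E.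
  rewrite lee_fin ler_wpM2l ?path_weight_ge0 //.
  exact: (scheme_cost_min a_supp a_ge0 a_sum hd).
have cost_ge0 t : (0 <= cost scheme_along t)%E.
  by rewrite lee_fin mulr_ge0 ?path_weight_ge0 ?(scheme_cost_ge0 r a_ge0).
have cost_fin : (\esum_(t in [set: k.+1.-tuple (Zs s)]) cost scheme_along t < +oo)%E.
  pose Yk w := y (Xn k.+1 w).
  have yk : eq_on_support a alpha k.+1 Yk Yk by split => // w w' h; rewrite /Yk h.
  by rewrite -(integral_cost_decomp yk scheme_along_depends)
    cost_scheme_along_lt_pinfty.
have cost_eq := esum_eq_of_le cost_ge0 cost_min hle cost_fin.
move=> w hw; set t := path_prefix k w.
have wt : forall i, (i <= k)%N -> Xn i w = Xn i (of_prefix t).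
  by apply/path_prefix_eq; rewrite path_prefixK.
rewrite (dZ w (of_prefix t) wt) (scheme_along_depends wt).
have t0 : path_weight a alpha k (of_prefix t) != 0.
  by rewrite -(path_weight_depends a alpha wt).
apply: (scheme_cost_min_unique a_supp a_ge0 a_sum hd).
by rewrite -(mulfI t0 (EFin_inj (cost_eq t))).
Qed.

End OneStep.

Section SchemeChain.
Variables (R : realType) (s : nat) (a alpha : Zs s -> R)
  (P : probability (OmegaT s) R) (r : seq (Zs s)) (X : Type) (d : X -> X -> R)
  (x : Zs s -> X) (n : nat).
Hypothesis chain : is_chain_law a alpha P.
Hypothesis a_ge0 : forall i, 0 <= a i.
Hypothesis alpha_ge0 : forall i, 0 <= alpha i.
Hypothesis a_supp : forall i, i \notin r -> a i = 0.
Hypothesis a_sum : forall i, \sum_(j \in [set: Zs s]) a (i - j *+ 2) = 1.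
Hypothesis hd : hadamard d.
Hypothesis x_bounded : bounded_seq d x.
Local Notation S := (scheme d a).

Lemma iter_scheme_bounded m :
  exists2 M, 0 <= M & forall i, d (iter m S x i) (x 0) <= M.
Proof.
have [M xM] := x_bounded; elim: m => [|m [M' M'0 hM']].
  by exists M => //; apply: le_trans (xM 0 0); rewrite (dist_xx (hadamard_metric hd)).
exists (2 * M'); first by rewrite mulr_ge0.
exact: (scheme_bounded a_supp a_ge0 a_sum hd M'0 hM').
Qed.

Lemma filtered_condexp_exists :
  exists Z0, is_filtered_condexp d P (Ffilt s) n (fun w => x (Xn n w)) Z0.
Proof.
exists (fun w => iter n S x (Xn 0 w)).
exists (fun k w => iter (n - k) S x (Xn k w)); split.
- by rewrite subnn.
- by rewrite subn0.
move=> k kn; have [M M0 hM] := iter_scheme_bounded (n - k.+1).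
rewrite -(subnSK kn).
apply: (scheme_along_condexp chain a_ge0 alpha_ge0 a_supp a_sum hd M0 hM).
by split => // w w' h; rewrite h.
Qed.

Lemma filtered_condexp_eq_on_support Z0 :
  is_filtered_condexp d P (Ffilt s) n (fun w => x (Xn n w)) Z0 ->
  eq_on_support a alpha 0 Z0 (fun w => iter n S x (Xn 0 w)).
Proof.
move=> [Z [ZN <- hZ]].
suff back j k : (k + j = n)%N ->
    eq_on_support a alpha k (Z k) (fun w => iter j S x (Xn k w)).
  exact: back.
elim: j k => [|j IH] k kj.
  rewrite addn0 in kj; rewrite kj ZN.
  by split => // w w' h; rewrite h.
have kn : (k < n)%N by rewrite -kj addnS ltnS leq_addr.
have [M M0 hM] := iter_scheme_bounded j.
apply: (condexp_eq_on_support chain a_ge0 alpha_ge0 a_supp a_sum hd M0 hM _ (hZ k kn)).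
by apply: IH; rewrite addSnnS.
Qed.

Lemma ae_path_weight0 : {ae P, forall w, path_weight a alpha 0 w != 0}.
Proof.
exists (Xn 0 @^-1` [set i | alpha i = 0]); split.
- exact: measurable_coord.
- apply: (chain_law_null chain (k := 0)) => [w w' h|w /= w0].
    by rewrite /preimage /= (h 0%N).
  by rewrite path_weightS /path_weight big_ord0 w0 !mul0r.
by move=> w /= /negP; rewrite negbK /path_weight big_ord0 mulr1 => /eqP.
Qed.

End SchemeChain.

Unset Implicit Arguments.
Set Strict Implicit.
Theorem mainTheorem2 (R : realType) (X : Type) (d : X -> X -> R) (s : nat)
    (a : Zs s -> R) (x : Zs s -> X) (n : nat) (alpha : Zs s -> R)
    (P : probability (OmegaT s) R) :
  hadamard d -> is_mask a -> bounded_seq d x ->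
  is_distribution alpha -> is_chain_law a alpha P ->
  (exists Z0 : OmegaT s -> X,
      is_filtered_condexp d P (Ffilt s) n (fun w => x (Xn n w)) Z0) /\
  (forall Z0 : OmegaT s -> X,
      is_filtered_condexp d P (Ffilt s) n (fun w => x (Xn n w)) Z0 ->
      {ae P, forall w, iter n (scheme d a) x (Xn 0 w) = Z0 w}).
Proof.
move=> hd [a_ge0 [r a_supp] a_sum] x_bounded [alpha_ge0 _] chain.
split.
  exact: (filtered_condexp_exists n chain a_ge0 alpha_ge0 a_supp a_sum hd x_bounded).
move=> Z0 Z0_condexp.
have [_ Z0_eq] := filtered_condexp_eq_on_support chain a_ge0 alpha_ge0 a_supp a_sum
  hd x_bounded Z0_condexp.
by apply: filterS (ae_path_weight0 chain) => w /Z0_eq ->.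
Qed.
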